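(* Let $h,g_1,g_2>0$ and $f\in(0,1)$. For $\Delta>0$ define (logarithms base $2$) \begin{align*} I_{hd,1}(\Delta)&=f\log\Big(1+\frac{h^2}{1+\Delta}+g_2^2\Big)+(1-f)\log(1+g_2^2),\\ I_{hd,2}(\Delta)&=(1-f)\log(1+g_1^2+g_2^2)+f\Big\{\log(1+g_2^2)-\log\frac{1+\Delta}{\Delta}\Big\}. \end{align*} Then there is a unique $\Delta>0$ with $I_{hd,1}(\Delta)=I_{hd,2}(\Delta)$, and this $\Delta=\Delta^*(f)$ maximizes $[\min\{I_{hd,1}(\Delta),I_{hd,2}(\Delta)\}]^+$ over $\Delta>0$, where $[x]^+=\max\{x,0\}$.
   Context: $[\min\{I_{hd,1},I_{hd,2}\}]^+$ is the quantize-map-and-forward rate of the half-duplex Gaussian single-relay channel in which the relay listens for a fraction $f$ of the block and transmits for the remaining fraction $1-f$, using a Gaussian vector quantizer of distortion $\Delta$; $h,g_1,g_2$ are the source-relay, relay-destination and source-destination channel magnitudes, all known to the relay. *)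

From Stdlib Require Import Reals.
Open Scope R_scope.

Definition log2 (x : R) : R := ln x / ln 2.

Definition pos_part (x : R) : R := Rmax x 0.

Definition I_hd1 (h g1 g2 f D : R) : R :=
  f * log2 (1 + h ^ 2 / (1 + D) + g2 ^ 2) + (1 - f) * log2 (1 + g2 ^ 2).

Definition I_hd2 (h g1 g2 f D : R) : R :=
  (1 - f) * log2 (1 + g1 ^ 2 + g2 ^ 2)
  + f * (log2 (1 + g2 ^ 2) - log2 ((1 + D) / D)).

Definition qmf_rate (h g1 g2 f D : R) : R :=
  pos_part (Rmin (I_hd1 h g1 g2 f D) (I_hd2 h g1 g2 f D)).

(** [I_hd1] is nonincreasing and [I_hd2] nondecreasing in the distortion, so
    the minimum of the two is maximised where they cross.  Their difference is,
    up to the factor [ln 2],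
      [f ln (1 + (A + h^2)/(A D)) - (1 - f) ln (B / A)]
    with [A = 1 + g2^2] and [B = 1 + g1^2 + g2^2]; as [B > A] and the first
    logarithm decreases strictly from [+oo] to [0], it vanishes at exactly one
    [D > 0], which can be solved for in closed form. *)

From Stdlib Require Import Reals Lra.
Open Scope R_scope.

Lemma ln2_pos : 0 < ln 2.
Proof. pose proof ln_lt_2; lra. Qed.

Lemma log2_le (x y : R) : 0 < x -> x <= y -> log2 x <= log2 y.
Proof.
  intros Hx [Hxy | <-]; [| lra].
  unfold log2, Rdiv; apply Rmult_le_compat_r.
  - left; apply Rinv_0_lt_compat, ln2_pos.
  - left; apply ln_increasing; assumption.
Qed.

Lemma ln_div (x y : R) : 0 < x -> 0 < y -> ln (x / y) = ln x - ln y.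
Proof.
  intros Hx Hy; unfold Rdiv.
  rewrite ln_mult, ln_Rinv; [ring | | | apply Rinv_0_lt_compat]; assumption.
Qed.

Lemma Rmin_le_at_crossing (F G : R -> R) (x0 x : R) :
  (forall u v, 0 < u <= v -> F v <= F u) ->
  (forall u v, 0 < u <= v -> G u <= G v) ->
  0 < x0 -> F x0 = G x0 -> 0 < x ->
  Rmin (F x) (G x) <= Rmin (F x0) (G x0).
Proof.
  intros F_anti G_mono Hx0 Hcross Hx.
  rewrite <- Hcross, (Rmin_left (F x0)) by lra.
  destruct (Rle_dec x x0) as [Hle | Hgt].
  - rewrite Hcross; eapply Rle_trans; [apply Rmin_r | apply G_mono; lra].
  - eapply Rle_trans; [apply Rmin_l | apply F_anti; lra].
Qed.

Lemma one_plus_div_eq_iff (a b k D : R) : 0 < a -> 0 < b -> 1 < k -> 0 < D ->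
  1 + a / (b * D) = k <-> D = a / (b * (k - 1)).
Proof.
  intros Ha Hb Hk HD; split; intros E.
  - rewrite <- E; field; repeat split; lra.
  - rewrite E; field; repeat split; lra.
Qed.

Section Rates.

Variables h g1 g2 f : R.

Lemma I_hd1_antitone (D1 D2 : R) :
  0 <= f -> 0 < D1 <= D2 -> I_hd1 h g1 g2 f D2 <= I_hd1 h g1 g2 f D1.
Proof.
  intros Hf HD.
  assert (Hh : 0 <= h ^ 2) by apply pow2_ge_0.
  assert (Hg2 : 0 <= g2 ^ 2) by apply pow2_ge_0.
  assert (Hq : 0 <= h ^ 2 / (1 + D2))
    by (apply Rmult_le_pos; [lra | left; apply Rinv_0_lt_compat; lra]).
  assert (Hdecr : h ^ 2 / (1 + D2) <= h ^ 2 / (1 + D1)).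
  { unfold Rdiv; apply Rmult_le_compat_l; [lra |].
    apply Rinv_le_contravar; lra. }
  unfold I_hd1; apply Rplus_le_compat_r, Rmult_le_compat_l; [lra |].
  apply log2_le; lra.
Qed.

Lemma I_hd2_monotone (D1 D2 : R) :
  0 <= f -> 0 < D1 <= D2 -> I_hd2 h g1 g2 f D1 <= I_hd2 h g1 g2 f D2.
Proof.
  intros Hf HD.
  assert (Hdecr : (1 + D2) / D2 <= (1 + D1) / D1).
  { replace ((1 + D1) / D1) with (1 + / D1) by (field; lra).
    replace ((1 + D2) / D2) with (1 + / D2) by (field; lra).
    apply Rplus_le_compat_l, Rinv_le_contravar; lra. }
  unfold I_hd2; apply Rplus_le_compat_l, Rmult_le_compat_l; [lra |].
  apply Rplus_le_compat_l, Ropp_le_contravar, log2_le; [| exact Hdecr].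
  apply Rdiv_lt_0_compat; lra.
Qed.

Lemma I_hd1_minus_I_hd2 (D : R) : 0 < D ->
  I_hd1 h g1 g2 f D - I_hd2 h g1 g2 f D =
  (f * ln (1 + (1 + g2 ^ 2 + h ^ 2) / ((1 + g2 ^ 2) * D))
   - (1 - f) * ln ((1 + g1 ^ 2 + g2 ^ 2) / (1 + g2 ^ 2))) / ln 2.
Proof.
  intros HD.
  assert (Hh : 0 <= h ^ 2) by apply pow2_ge_0.
  assert (Hg1 : 0 <= g1 ^ 2) by apply pow2_ge_0.
  assert (Hg2 : 0 <= g2 ^ 2) by apply pow2_ge_0.
  assert (Hq : 0 <= h ^ 2 / (1 + D))
    by (apply Rmult_le_pos; [lra | left; apply Rinv_0_lt_compat; lra]).
  assert (Hratio : 0 < (1 + D) / D) by (apply Rdiv_lt_0_compat; lra).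
  replace (1 + (1 + g2 ^ 2 + h ^ 2) / ((1 + g2 ^ 2) * D))
    with ((1 + h ^ 2 / (1 + D) + g2 ^ 2) * ((1 + D) / D) / (1 + g2 ^ 2))
    by (field; lra).
  unfold I_hd1, I_hd2, log2.
  rewrite (ln_div (_ * _)), ln_mult, !ln_div
    by (try (apply Rmult_lt_0_compat; lra); lra).
  pose proof ln2_pos.
  field; lra.
Qed.

(** The common value [1 + (A + h^2)/(A D)] at the crossing, namely
    [(B / A) ^ ((1 - f) / f)]. *)
Definition crossing_level : R :=
  exp ((1 - f) / f * ln ((1 + g1 ^ 2 + g2 ^ 2) / (1 + g2 ^ 2))).

Definition crossing_distortion : R :=
  (1 + g2 ^ 2 + h ^ 2) / ((1 + g2 ^ 2) * (crossing_level - 1)).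

Hypothesis g1_pos : 0 < g1.
Hypothesis f_in01 : 0 < f < 1.

Lemma crossing_level_gt1 : 1 < crossing_level.
Proof.
  assert (Hg1 : 0 < g1 ^ 2) by (apply pow_lt; exact g1_pos).
  assert (Hg2 : 0 <= g2 ^ 2) by apply pow2_ge_0.
  assert (Hln : 0 < ln ((1 + g1 ^ 2 + g2 ^ 2) / (1 + g2 ^ 2))).
  { replace ((1 + g1 ^ 2 + g2 ^ 2) / (1 + g2 ^ 2))
      with (1 + g1 ^ 2 / (1 + g2 ^ 2)) by (field; lra).
    assert (0 < g1 ^ 2 / (1 + g2 ^ 2)) by (apply Rdiv_lt_0_compat; lra).
    rewrite <- ln_1; apply ln_increasing; lra. }
  unfold crossing_level; rewrite <- exp_0 at 1; apply exp_increasing.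
  apply Rmult_lt_0_compat; [apply Rdiv_lt_0_compat |]; lra.
Qed.

Lemma crossing_distortion_pos : 0 < crossing_distortion.
Proof.
  pose proof crossing_level_gt1.
  assert (Hh : 0 <= h ^ 2) by apply pow2_ge_0.
  assert (Hg2 : 0 <= g2 ^ 2) by apply pow2_ge_0.
  apply Rdiv_lt_0_compat; [| apply Rmult_lt_0_compat]; lra.
Qed.

Lemma I_hd_eq_iff (D : R) : 0 < D ->
  I_hd1 h g1 g2 f D = I_hd2 h g1 g2 f D <-> D = crossing_distortion.
Proof.
  intros HD.
  pose proof ln2_pos.
  assert (Hh : 0 <= h ^ 2) by apply pow2_ge_0.
  assert (Hg2 : 0 <= g2 ^ 2) by apply pow2_ge_0.
  set (X := 1 + (1 + g2 ^ 2 + h ^ 2) / ((1 + g2 ^ 2) * D)).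
  set (L := ln ((1 + g1 ^ 2 + g2 ^ 2) / (1 + g2 ^ 2))).
  assert (HX : 0 < X).
  { assert (0 < (1 + g2 ^ 2 + h ^ 2) / ((1 + g2 ^ 2) * D))
      by (apply Rdiv_lt_0_compat; [| apply Rmult_lt_0_compat]; lra).
    unfold X; lra. }
  transitivity (f * ln X = (1 - f) * L).
  { pose proof (I_hd1_minus_I_hd2 D HD) as Hdiff; fold X L in Hdiff.
    split; intros E.
    - rewrite E, Rminus_diag in Hdiff.
      apply Rminus_diag_uniq.
      replace (f * ln X - (1 - f) * L)
        with ((f * ln X - (1 - f) * L) / ln 2 * ln 2) by (field; lra).
      rewrite <- Hdiff; ring.
    - apply Rminus_diag_uniq; rewrite Hdiff, E; field; lra. }
  transitivity (X = crossing_level).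
  { unfold crossing_level; fold L; split; intros E.
    - rewrite <- (exp_ln X HX); f_equal.
      apply (Rmult_eq_reg_l f); [rewrite E; field |]; lra.
    - rewrite E, ln_exp; field; lra. }
  apply one_plus_div_eq_iff; try lra; apply crossing_level_gt1.
Qed.

End Rates.

Theorem mainTheorem12 (h g1 g2 f : R) :
  0 < h -> 0 < g1 -> 0 < g2 -> 0 < f < 1 ->
  exists Dstar : R,
    (0 < Dstar /\ I_hd1 h g1 g2 f Dstar = I_hd2 h g1 g2 f Dstar /\
     (forall D : R, 0 < D -> I_hd1 h g1 g2 f D = I_hd2 h g1 g2 f D -> D = Dstar)) /\
    (forall D : R, 0 < D -> qmf_rate h g1 g2 f D <= qmf_rate h g1 g2 f Dstar).
Proof.
  intros _ Hg1 _ Hf.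
  pose proof (crossing_distortion_pos h g1 g2 f Hg1 Hf) as HDs.
  set (Ds := crossing_distortion h g1 g2 f) in *.
  assert (Hcross : I_hd1 h g1 g2 f Ds = I_hd2 h g1 g2 f Ds)
    by (apply I_hd_eq_iff; auto).
  exists Ds; split; [split; [exact HDs | split; [exact Hcross |]] |].
  - intros D HD E; apply (I_hd_eq_iff h g1 g2 f Hg1 Hf D HD), E.
  - intros D HD; apply Rle_max_compat_r.
    apply (Rmin_le_at_crossing (I_hd1 h g1 g2 f) (I_hd2 h g1 g2 f));
      try assumption.
    + intros u v Huv; apply I_hd1_antitone; lra.
    + intros u v Huv; apply I_hd2_monotone; lra.
Qed.
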